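(* Let $D$ be a dendrite of finite length with respect to its metric $d$, let $f\colon D\to D$ be continuous, and let $E\subseteq D$ be a connected set with $\limsup_{n\to\infty}\operatorname{diam} f^n(E)>0$. Then: (1) There exists a least nonnegative integer $n_0$ such that $f^{n_0}(E)\cap f^{n_0+k}(E)\ne\emptyset$ for some positive integer $k$. (2) Let $k$ be any positive integer with $f^{n_0}(E)\cap f^{n_0+k}(E)\ne\emptyset$. Then the sets $K_i=\bigcup_{j=0}^\infty f^{n_0+i+jk}(E)$, $i\in\{0,1,\dots,k-1\}$, are connected, $f(K_i)=K_{i+1}$ for $i\in\{0,\dots,k-2\}$, and $f(K_{k-1})\subseteq K_0$. (3) The set $\operatorname{Orb}_f(f^{n_0}(E))$ has finitely many components $L_0,L_1,\dots,L_{r-1}$, where $r$ divides $k$, which can be numbered so that $L_0\supseteq K_0\supseteq f^{n_0}(E)$, $f(L_j)=L_{j+1}$ for $j\in\{0,\dots,r-2\}$ and $f(L_{r-1})\subseteq L_0$; moreover $L_j=\bigcup_{\ell=0}^{k/r-1}K_{j+\ell r}$ for every $j\in\{0,\dots,r-1\}$. (4) $\operatorname{Orb}_f(E)$ is the disjoint union $E\sqcup f(E)\sqcup\dots\sqcup f^{n_0-1}(E)\sqcup L_0\sqcup L_1\sqcup\dots\sqcup L_{r-1}$.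
   Context: A dendrite is a locally connected continuum containing no simple closed curve. Standing convention: the metric $d$ on $D$ is convex (for any $x,y$ there is $z$ with $d(x,z)=d(z,y)=d(x,y)/2$) and compatible with the topology; $D$ has finite length means its one-dimensional Hausdorff measure $\mathcal H^1_d(D)$ is finite. $\operatorname{Orb}_f(A)=\bigcup_{n\ge0}f^n(A)$. *)

From HB Require Import structures.
From mathcomp Require Import all_boot all_order all_algebra.
From mathcomp Require Import all_classical all_reals all_analysis.
Set Implicit Arguments. Unset Strict Implicit. Unset Printing Implicit Defensive.
Import Order.TTheory GRing.Theory Num.Theory.
Import numFieldNormedType.Exports.
Local Open Scope classical_set_scope.
Local Open Scope ring_scope.

Section Defs.
Variables (R : realType) (T : topologicalType).

Definition compatible_metric (d : T -> T -> R) : Prop :=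
  [/\ (forall x y, 0 <= d x y),
      (forall x y, d x y = 0 <-> x = y),
      (forall x y, d x y = d y x),
      (forall x y z, d x z <= d x y + d y z) &
      (forall (x : T) (A : set T),
          nbhs x A <-> exists2 e : R, 0 < e & [set y | d x y < e] `<=` A)].

Definition convex_metric (d : T -> T -> R) : Prop :=
  forall x y, exists z, d x z = d x y / 2 /\ d z y = d x y / 2.

(* diameter of a set (diam of the empty set is 0), extended-real valued *)
Definition diam (d : T -> T -> R) (A : set T) : \bar R :=
  ereal_sup ([set 0%E] `|` [set (d x y)%:E | x in A & y in A]).

Definition hausdorff1_delta (d : T -> T -> R) (delta : R) (A : set T) : \bar R :=
  ereal_inf [set (\sum_(0 <= i <oo) diam d (U i))%E | U in
    [set U : nat -> set T | A `<=` \bigcup_i U i /\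
                            forall i, (diam d (U i) <= delta%:E)%E]].

Definition hausdorff1 (d : T -> T -> R) (A : set T) : \bar R :=
  ereal_sup [set hausdorff1_delta d delta A | delta in [set delta : R | 0 < delta]].

Definition locally_connected_space : Prop :=
  forall (x : T) (U : set T), nbhs x U ->
    exists V : set T, [/\ open V, connected V, V x & V `<=` U].

Definition simple_closed_curve (S : set T) : Prop :=
  exists g : R -> T,
    [/\ {within `[0, 1], continuous g},
        g 0 = g 1,
        (forall s t : R, 0 <= s < 1 -> 0 <= t < 1 -> g s = g t -> s = t) &
        S = g @` `[0, 1]].

Definition dendrite : Prop :=
  [/\ [set: T] !=set0, compact [set: T], connected [set: T],
      locally_connected_space &
      forall S : set T, ~ simple_closed_curve S].

Definition fiter (f : T -> T) (n : nat) (A : set T) : set T := iter n f @` A.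

Definition orbit_set (f : T -> T) (A : set T) : set T :=
  \bigcup_(n in [set: nat]) fiter f n A.

End Defs.

Definition Kset (T : topologicalType) (f : T -> T) (E : set T) (n0 k i : nat) : set T :=
  \bigcup_(j in [set: nat]) fiter f (n0 + i + j * k) E.

From HB Require Import structures.
From mathcomp Require Import all_boot all_order all_algebra.
From mathcomp Require Import all_classical all_reals all_analysis.
From mathcomp Require Import finmap lra zify measurable_realfun.
Set Implicit Arguments. Unset Strict Implicit. Unset Printing Implicit Defensive.
Import Order.TTheory GRing.Theory Num.Theory.
Import numFieldNormedType.Exports.
Local Open Scope classical_set_scope.
Local Open Scope ring_scope.

(* If no two iterates f^n(E), f^(n+k)(E) met, the f^n(E) would be pairwise
   disjoint continua, infinitely many of diameter > e.  By compactness
   infinitely many of them come within e/4 of a single point z, so each of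
   those crosses every sphere S(z, r) with e/4 < r < e/2, and every such
   sphere contains infinitely many points.  Eilenberg's inequality
   [int_a^b #S(z, r) dr <= 2 H^1(D)] rules this out when D has finite length.
   So a least n0 exists.  Then f maps the component of f^m(f^n0(E)) in
   Orb_f(f^n0(E)) into that of f^(m+1)(f^n0(E)); these components are
   permuted cyclically with period the first return time r of the component
   of f^n0(E), and r divides every k with f^n0(E) meeting f^(n0+k)(E).
   Minimality of n0 separates E, ..., f^(n0-1)(E) from each other and from the
   rest of the orbit. *)

Section diameter.
Variables (R : realType) (T : topologicalType) (d : T -> T -> R).

Lemma diam_ge0 A : (0 <= diam d A)%E.
Proof. by apply: ereal_sup_ubound; left. Qed.

Lemma dist_le_diam A x y : A x -> A y -> ((d x y)%:E <= diam d A)%E.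
Proof. by move=> Ax Ay; apply: ereal_sup_ubound; right; exists x => //; exists y. Qed.

Lemma diam_fin A : (diam d A < +oo)%E -> diam d A = (fine (diam d A))%:E.
Proof. by move=> Afin; rewrite fineK // ge0_fin_numE ?diam_ge0. Qed.

Lemma hausdorff1_lt_cover (L delta : R) :
  (hausdorff1 d setT < L%:E)%E -> 0 < delta ->
  exists U : nat -> set T, [/\ setT `<=` \bigcup_i U i,
    (forall i, (diam d (U i) <= delta%:E)%E) &
    (\sum_(0 <= i <oo) diam d (U i) < L%:E)%E].
Proof.
move=> HL delta_gt0.
have : (hausdorff1_delta d delta setT < L%:E)%E.
  by apply: le_lt_trans HL; apply: ereal_sup_ubound; exists delta.
by move=> /ereal_inf_lt [_ [U [UT Udelta] <-] UL]; exists U.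
Qed.

End diameter.

Lemma limn_einf_ge (R : realType) (u : (\bar R)^nat) (c : \bar R) :
  (\forall j \near \oo, (c <= u j)%E) -> (c <= limn_einf u)%E.
Proof.
move=> [N _ hN]; rewrite limn_einf_lim; apply: lime_ge; first exact: is_cvg_einfs.
apply: filterS (nbhs_infty_ge N) => n Nn.
apply: le_ereal_inf_tmp => _ [m /= nm <-]; apply: hN => /=.
exact: leq_trans Nn nm.
Qed.

Lemma limn_einf_le (R : realType) (u : (\bar R)^nat) (c : \bar R) :
  (forall j, (u j <= c)%E) -> (limn_einf u <= c)%E.
Proof.
move=> uc; rewrite limn_einf_lim; apply: lime_le; first exact: is_cvg_einfs.
apply: nearW => n; apply: le_trans (uc n).
by apply: ereal_inf_lbound; exists n => /=.
Qed.

Lemma measurable_fun_limn_einf (dT : measure_display) (X : measurableType dT)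
    (R : realType) (D : set X) (f : (X -> \bar R)^nat) :
  (forall n, measurable_fun D (f n)) ->
  measurable_fun D (fun x => limn_einf (f ^~ x)).
Proof.
move=> mf; have -> : (fun x => limn_einf (f ^~ x)) =
    (fun x => - limn_esup (-%E \o f ^~ x))%E.
  by apply/funext => x; rewrite limn_esupN oppeK.
apply: measurableT_comp => //; apply: measurable_fun_limn_esup => n.
exact: measurableT_comp.
Qed.

Section sphere_counting.
Variables (R : realType) (T : topologicalType) (d : T -> T -> R).
Hypothesis d_ge0 : forall x y, 0 <= d x y.
Hypothesis d_sym : forall x y, d x y = d y x.
Hypothesis d_triangle : forall x y z, d x z <= d x y + d y z.
Hypothesis d_eq0 : forall x y, d x y = 0 -> x = y.

Lemma near_separated (s : seq T) :
  \forall j \near \oo, {in s &, forall p q, p != q -> j.+1%:R^-1 < d p q}.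
Proof.
pose sep (pq : T * T) j := pq.1 != pq.2 -> j.+1%:R^-1 < d pq.1 pq.2.
pose D := seq_fset tt [seq (p, q) | p <- s, q <- s].
have : \oo (\bigcap_(pq in [set` D]) sep pq).
  apply: filter_bigI => -[p q] _.
  have [<-|pq] := eqVneq p q; first by exists 0%N => // j _; rewrite /sep eqxx.
  have pq_gt0 : 0 < d p q.
    by rewrite lt0r d_ge0 andbT; apply: contra pq => /eqP /d_eq0 ->.
  by apply: filterS (near_infty_natSinv_lt (PosNum pq_gt0)) => j + _.
apply: filterS => j s_sep p q ps qs; apply: (s_sep (p, q)).
by rewrite /= seq_fsetE; apply/allpairsP; exists (p, q).
Qed.

Variable x : T.

(* Summing the indicators of the shadows of a fine cover bounds the number of
   points on the sphere [d x _ = t] by a function of [t] whose integral is at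
   most twice the length of the cover (Eilenberg's inequality). *)
Definition shadow (U : set T) : set R :=
  `[d x (xget x U) - fine (diam d U), d x (xget x U) + fine (diam d U)]%classic.

Lemma shadow_dist (U : set T) p : (diam d U < +oo)%E -> U p -> shadow U (d x p).
Proof.
move=> Ufin Up; have Uy : U (xget x U) by case: xgetP => // /(_ p).
move: Uy; rewrite /shadow; set y := xget x U => Uy.
have := dist_le_diam d Uy Up; rewrite diam_fin // lee_fin => dyp.
have := d_triangle x p y; have := d_triangle x y p; rewrite (d_sym p y).
by rewrite /= in_itv /=; move=> ? ?; apply/andP; split; lra.
Qed.

Definition shadow_count (U : nat -> set T) (t : R) : \bar R :=
  (\sum_(0 <= i <oo) (\1_(shadow (U i)) t)%:E)%E.

Lemma shadow_count_ge0 U t : (0 <= shadow_count U t)%E.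
Proof. by apply: nneseries_ge0 => i _ _; rewrite lee_fin indicE; case: (_ \in _). Qed.

Lemma measurable_shadow_count U (D : set R) :
  measurable_fun D (fun t => shadow_count U t).
Proof.
apply: ge0_emeasurable_sum => [i t _ _|i _].
  by rewrite lee_fin indicE; case: (_ \in _).
by apply/measurable_EFinP; apply: measurable_indic; exact: measurable_itv.
Qed.

Lemma integral_shadow_count_le (U : nat -> set T) (a b : R) :
  (forall i, diam d (U i) < +oo)%E ->
  (\int[lebesgue_measure]_(t in `]a, b[) shadow_count U t <=
     2%:E * \sum_(0 <= i <oo) diam d (U i))%E.
Proof.
move=> Ufin; have mab : measurable (`]a, b[%classic : set R) by exact: measurable_itv.
rewrite integral_nneseries //; last first.
  move=> i; apply/measurable_EFinP; apply: measurable_indic; exact: measurable_itv.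
rewrite -nneseriesZl; last by move=> i _; exact: diam_ge0.
apply: lee_nneseries => [i _ _|i _]; first exact: integral_ge0.
rewrite integral_indic //; last exact: measurable_itv.
apply: le_trans (measureIl _ _ _) _; [exact: measurable_itv|exact: mab|].
rewrite /shadow; set c := d x _; set D := fine _.
have D0 : 0 <= D by rewrite fine_ge0 // diam_ge0.
have := lebesgue_measure_itv `[c - D, c + D]; rewrite /= => ->.
by rewrite diam_fin // -/D -EFinM; case: ifP => _; rewrite lee_fin; lra.
Qed.

Lemma sphere_points_le_shadow_count (U : nat -> set T) (delta t : R) (s : seq T) :
  setT `<=` \bigcup_i U i -> (forall i, diam d (U i) <= delta%:E)%E ->
  uniq s -> all (fun p => d x p == t) s ->
  {in s &, forall p q, p != q -> delta < d p q} ->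
  ((size s)%:R%:E <= shadow_count U t)%E.
Proof.
move=> cover Udelta us s_sphere s_sep.
pose io p := xget 0%N (fun i => U i p).
have Uio p : U (io p) p.
  by rewrite /io; case: xgetP => // none; have [i _ Ui] := cover p I; case: (none i).
have io_inj : {in s &, injective io}.
  move=> p q ps qs e; apply/eqP; apply: contraT => pq.
  have Uq : U (io p) q by rewrite e.
  have := le_trans (dist_le_diam d (Uio p) Uq) (Udelta (io p)).
  by rewrite lee_fin leNgt s_sep.
pose u := map io s; pose M := (\max_(i <- u) i).+1.
have uM i : i \in u -> (i < M)%N.
  by move=> iu; rewrite ltnS; exact: (leq_bigmax_seq (F := id) (P := xpredT) i iu).
have le_count : (size u <= count (mem u) (iota 0 M))%N.
  rewrite -size_filter uniq_leq_size ?map_inj_in_uniq // => i iu.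
  by rewrite mem_filter mem_iota uM ?andbT.
apply: le_trans (nneseries_lim_ge M _) => [|i _ _]; last first.
  by rewrite lee_fin indicE; case: (_ \in _).
rewrite sumEFin lee_fin -(size_map io) -/u.
apply: le_trans (_ : (count (mem u) (iota 0 M))%:R <= _); first by rewrite ler_nat.
rewrite -sum1_count big_mkcond natr_sum /index_iota subn0.
apply: ler_sum => i _; case: ifP => iu /=; last by rewrite indicE; case: (_ \in _).
move/mapP: iu => [p ps ->]; rewrite indicE mem_set //.
have /eqP <- := allP s_sphere p ps.
apply: shadow_dist (Uio p); exact: le_lt_trans (Udelta _) (ltry _).
Qed.

Lemma limn_einf_shadow_count_ge (U : nat -> nat -> set T) (t : R) (s : seq T) :
  (forall j, setT `<=` \bigcup_i U j i) ->
  (forall j i, (diam d (U j i) <= (j.+1%:R^-1)%:E)%E) ->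
  uniq s -> all (fun p => d x p == t) s ->
  ((size s)%:R%:E <= limn_einf (fun j => shadow_count (U j) t))%E.
Proof.
move=> cover mesh us st; apply: limn_einf_ge.
apply: filterS (near_separated s) => j s_sep.
exact: sphere_points_le_shadow_count (cover j) (mesh j) us st s_sep.
Qed.

Lemma integral_limn_einf_shadow_count_le (U : nat -> nat -> set T) (L a b : R) :
  (forall j i, (diam d (U j i) < +oo)%E) ->
  (forall j, (\sum_(0 <= i <oo) diam d (U j i) <= L%:E)%E) ->
  (\int[lebesgue_measure]_(t in `]a, b[)
     limn_einf (fun j => shadow_count (U j) t) <= (2 * L)%:E)%E.
Proof.
move=> Ufin UL; have mab : measurable (`]a, b[%classic : set R) by exact: measurable_itv.
apply: le_trans (@fatou _ _ _ lebesgue_measure _ mab (fun j t => shadow_count (U j) t)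
  (fun j => @measurable_shadow_count (U j) _) (fun j t _ => shadow_count_ge0 (U j) t)) _.
apply: limn_einf_le => j; apply: le_trans (integral_shadow_count_le _ _ (Ufin j)) _.
by rewrite EFinM lee_pmul2l.
Qed.

Lemma exists_sphere_few_points (L a b : R) (K : nat) :
  (hausdorff1 d setT < L%:E)%E -> a < b -> 2 * L < K.+1%:R * (b - a) ->
  exists2 r, a < r < b & forall s : seq T, uniq s ->
    all (fun p => d x p == r) s -> (size s <= K)%N.
Proof.
move=> HL ab HK; apply: contrapT => few.
have inv_gt0 j : 0 < j.+1%:R^-1 :> R by rewrite invr_gt0 ltr0n.
have [U hU] := choice (fun j => hausdorff1_lt_cover HL (inv_gt0 j)).
have mab : measurable (`]a, b[%classic : set R) by exact: measurable_itv.
have cover j : setT `<=` \bigcup_i U j i by have [] := hU j.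
have mesh j i : (diam d (U j i) <= (j.+1%:R^-1)%:E)%E by have [_ ->] := hU j.
have mass j : (\sum_(0 <= i <oo) diam d (U j i) < L%:E)%E by have [] := hU j.
have liminf_ge t : `]a, b[%classic t ->
    (K.+1%:R%:E <= limn_einf (fun j => shadow_count (U j) t))%E.
  rewrite /= in_itv /= => abt; apply: contrapT => /negP; rewrite -ltNge => small.
  apply: few; exists t => // s us st; rewrite leqNgt; apply/negP => Ks.
  have := limn_einf_shadow_count_ge cover mesh us st.
  by move=> /le_lt_trans/(_ small); rewrite lte_fin ltr_nat ltnNge Ks.
have : ((K.+1%:R * (b - a))%:E <= (2 * L)%:E)%E.
  have -> : (K.+1%:R * (b - a))%:E =
      (\int[lebesgue_measure]_(t in `]a, b[) K.+1%:R%:E)%E.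
    rewrite integral_cst //; have := lebesgue_measure_itv `]a, b[; rewrite /= => ->.
    by rewrite lte_fin ab -EFinD -EFinM.
  apply: (le_trans _ (integral_limn_einf_shadow_count_le a b
    (fun j i => le_lt_trans (mesh j i) (ltry _)) (fun j => ltW (mass j)))).
  apply: ge0_le_integral => //.
  by apply: measurable_fun_limn_einf => j; exact: measurable_shadow_count.
by rewrite lee_fin; lra.
Qed.

End sphere_counting.

Lemma frequently_subseq (P : nat -> Prop) :
  (forall N, exists2 n, (N <= n)%N & P n) ->
  exists2 phi : nat -> nat, injective phi & forall i, P (phi i).
Proof.
move=> freqP; have pick N : exists n, (N <= n)%N /\ P n by have [n] := freqP N; exists n.
have [g gP] := choice pick.
pose phi i := iter i (fun n => g n.+1) (g 0%N).
exists phi; last by case=> [|i]; [exact: (gP 0%N).2|exact: (gP _).2].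
apply/(increasing_seq_injective (T := nat))/increasing_seqP => i.
exact: (gP (phi i).+1).1.
Qed.

Lemma compact_seq_cluster (T : topologicalType) (u : nat -> T) :
  compact [set: T] ->
  exists z : T, forall N (V : set T), nbhs z V -> exists2 m, (N <= m)%N & V (u m).
Proof.
move=> cT; have [z [_ zu]] := cT (u @ \oo) _ filterT; exists z => N V zV.
have uN : (u @ \oo) (u @` [set m | (N <= m)%N]).
  by apply: filterS (nbhs_infty_ge N) => m Nm; exists m.
by have [_ [[m Nm <-] Vum]] := zu _ _ uN zV; exists m.
Qed.

Section metric_topology.
Variables (R : realType) (T : topologicalType) (d : T -> T -> R).
Hypothesis d_sym : forall x y, d x y = d y x.
Hypothesis d_triangle : forall x y z, d x z <= d x y + d y z.
Hypothesis d_nbhs : forall (x : T) (A : set T),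
  nbhs x A <-> exists2 e : R, 0 < e & [set y | d x y < e] `<=` A.

Lemma open_dist_lt (z : T) (r : R) : open [set y | d z y < r].
Proof.
rewrite openE => y /= zy; apply/d_nbhs; exists (r - d z y); first by lra.
by move=> w /= yw; have := d_triangle z y w; lra.
Qed.

Lemma open_dist_gt (z : T) (r : R) : open [set y | r < d z y].
Proof.
rewrite openE => y /= zy; apply/d_nbhs; exists (d z y - r); first by lra.
by move=> w /= yw; have := d_triangle z w y; rewrite (d_sym w y); lra.
Qed.

Lemma connected_meets_sphere (A : set T) (z p q : T) (r : R) :
  connected A -> A p -> A q -> d z p < r -> r < d z q ->
  exists2 y, A y & d z y = r.
Proof.
move=> cA Ap Aq zp zq; apply: contrapT => no_y.
have inner : A `&` [set y | d z y < r] = A `&` ~` [set y | r < d z y].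
  apply/seteqP; split => y [Ay /= zy]; split => //=; first by move=> ?; lra.
  have : d z y != r by apply/eqP => zyr; apply: no_y; exists y.
  by rewrite neq_lt => /orP[//|rzy]; case: zy.
have : A `&` [set y | d z y < r] = A.
  apply: cA; first by exists p.
  - by exists [set y | d z y < r] => //; exact: open_dist_lt.
  - by exists (~` [set y | r < d z y]); rewrite ?closedC //; exact: open_dist_gt.
by move=> /seteqP[_ /(_ q Aq) [_ /=]]; lra.
Qed.

End metric_topology.

Lemma chain_connected (T : topologicalType) (B : nat -> set T) :
  (forall j, connected (B j)) -> (forall j, B j `&` B j.+1 !=set0) ->
  connected (\bigcup_(j in [set: nat]) B j).
Proof.
move=> cB BB; pose C n := \bigcup_(j in [set j | (j <= n)%N]) B j.
have CS n : C n.+1 = C n `|` B n.+1.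
  apply/seteqP; split => [y [j /= + Bj]|y [[j /= jn Bj]|Bn]].
  - by rewrite leq_eqVlt ltnS => /orP[/eqP jn|jn]; [right; rewrite -jn|left; exists j].
  - by exists j => //=; exact: leqW.
  - by exists n.+1 => /=.
have C0 : C 0%N = B 0%N.
  apply/seteqP; split => [y [j /= + Bj]|y B0y]; last by exists 0%N.
  by rewrite leqn0 => /eqP j0; rewrite -j0.
have cC n : connected (C n).
  elim: n => [|n IH]; first by rewrite C0.
  rewrite CS; apply: connectedU => //; have [y [Bny BSny]] := BB n.
  by exists y; split => //; exists n => /=.
have -> : \bigcup_(j in [set: nat]) B j = \bigcup_(n in [set: nat]) C n.
  apply/seteqP; split => [y [j _ Bj]|y [n _ [j _ Bj]]]; last by exists j.
  by exists j => //; exists j => /=.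
apply: bigcup_connected => // ; have [y [B0y _]] := BB 0%N.
by exists y => n _; exists 0%N.
Qed.

Section iterates.
Variables (T : topologicalType) (f : T -> T).

Lemma continuous_iter n : continuous f -> continuous (iter n f).
Proof.
move=> fc; elim: n => [|n IH] x /=; first exact: cvg_id.
exact: (continuous_comp (IH x) (fc _)).
Qed.

Lemma fiter_connected n (A : set T) :
  continuous f -> connected A -> connected (fiter f n A).
Proof.
move=> fc cA; apply: connected_continuous_connected => //.
exact/continuous_subspaceT/continuous_iter.
Qed.

Lemma image_fiter n (A : set T) : f @` fiter f n A = fiter f n.+1 A.
Proof.
apply/seteqP; split => [_ [_ [x Ax <-] <-]|_ [x Ax <-]]; first by exists x.
by exists (iter n f x) => //; exists x.
Qed.

Lemma fiterD m n (A : set T) : fiter f m (fiter f n A) = fiter f (m + n) A.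
Proof.
apply/seteqP; split => [_ [_ [x Ax <-] <-]|_ [x Ax <-]].
  by exists x => //; rewrite iterD.
by exists (iter n f x); [exists x|rewrite iterD].
Qed.

Lemma fiter_meets_shift (A : set T) n k j :
  fiter f n A `&` fiter f (n + k) A !=set0 ->
  fiter f (j + n) A `&` fiter f (j + n + k) A !=set0.
Proof.
move=> [_ [[x Ax <-] [x' Ax' ex']]]; exists (iter j f (iter n f x)); split.
  by exists x => //; rewrite iterD.
by exists x' => //; rewrite -addnA iterD ex'.
Qed.

End iterates.

Lemma limn_esup_gt0_frequently (R : realType) (u : (\bar R)^nat) :
  (0 < limn_esup u)%E ->
  exists2 e : R, 0 < e & forall N, exists2 n, (N <= n)%N & (e%:E < u n)%E.
Proof.
move=> u_gt0; have [e e_gt0 eu] : exists2 e : R, 0 < e & (e%:E < limn_esup u)%E.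
  case: (limn_esup u) u_gt0 => [l| |] //=; last by exists 1 => //; exact: ltry.
  by rewrite lte_fin => l_gt0; exists (l / 2); rewrite ?lte_fin; lra.
exists e => // N; have : (e%:E < esups u N)%E.
  apply: lt_le_trans eu _; rewrite limn_esup_lim.
  apply: lime_le; first exact: is_cvg_esups.
  by apply: filterS (nbhs_infty_ge N) => n Nn; exact: nonincreasing_esups.
by move=> /ereal_sup_gt [_ [n /= Nn <-] en]; exists n.
Qed.

Section disjoint_connected_family.
Variables (R : realType) (T : topologicalType) (d : T -> T -> R).
Hypothesis d_ge0 : forall x y, 0 <= d x y.
Hypothesis d_sym : forall x y, d x y = d y x.
Hypothesis d_triangle : forall x y z, d x z <= d x y + d y z.
Hypothesis d_eq0 : forall x y, d x y = 0 -> x = y.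
Hypothesis d_nbhs : forall (x : T) (A : set T),
  nbhs x A <-> exists2 e : R, 0 < e & [set y | d x y < e] `<=` A.
Hypothesis finite_length : (hausdorff1 d [set: T] < +oo)%E.

Lemma no_disjoint_connected_crossings (A : nat -> set T) (z : T) (a b : R) :
  a < b -> (forall i, connected (A i)) ->
  (forall i j, i != j -> A i `&` A j = set0) ->
  (forall i, exists2 p, A i p & d z p < a) ->
  (forall i, exists2 q, A i q & b < d z q) -> False.
Proof.
move=> ab cA disjA inner outer.
have [L HL] : exists L : R, (hausdorff1 d [set: T] < L%:E)%E.
  move: finite_length; case: (hausdorff1 d [set: T]) => [l _| //| _].
    by exists (l + 1); rewrite lte_fin; lra.
  by exists 0; exact: ltNyr.
pose K := Num.truncn (2 * L / (b - a)).
have HK : 2 * L < K.+1%:R * (b - a).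
  by have := truncnS_gt (2 * L / (b - a)); rewrite -/K ltr_pdivrMr // subr_gt0.
have [r /andP[ar rb] few] :=
  exists_sphere_few_points d_ge0 d_sym d_triangle d_eq0 z HL ab HK.
have on_sphere i : exists y, A i y /\ d z y = r.
  have [p Ap zp] := inner i; have [q Aq zq] := outer i.
  have [y Ay zy] := connected_meets_sphere d_sym d_triangle d_nbhs (cA i) Ap Aq
    (lt_trans zp ar) (lt_trans rb zq).
  by exists y.
have [y Ay] := choice on_sphere.
have y_inj : injective y.
  move=> i j yij; apply: contrapT => /eqP ij.
  have := disjA i j ij; rewrite -subset0 => /(_ (y i)); apply.
  by split; [|rewrite yij]; exact: (Ay _).1.
suff : (size (map y (iota 0 K.+1)) <= K)%N by rewrite size_map size_iota ltnn.
apply: few; first by rewrite map_inj_uniq ?iota_uniq.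
by apply/allP => _ /mapP [i _ ->]; apply/eqP; exact: (Ay i).2.
Qed.

Lemma disjoint_connected_diam_small (A : nat -> set T) (e : R) :
  compact [set: T] -> 0 < e -> (forall i, connected (A i)) ->
  (forall i j, i != j -> A i `&` A j = set0) ->
  exists N, forall n, (N <= n)%N -> (diam d (A n) <= e%:E)%E.
Proof.
move=> cT e_gt0 cA disjA; apply: contrapT => large.
have far N : exists w : nat * (T * T),
    [/\ (N <= w.1)%N, A w.1 w.2.1, A w.1 w.2.2 & e < d w.2.1 w.2.2].
  have [n Nn en] : exists2 n, (N <= n)%N & (e%:E < diam d (A n))%E.
    apply: contrapT => small; apply: large; exists N => n Nn.
    by rewrite leNgt; apply/negP => en; apply: small; exists n.
  have [_ [/= ->|[p Ap [q Aq <-]]] ey] := ereal_sup_gt en.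
    by move: ey; rewrite lte_fin; lra.
  by exists (n, (p, q)); split => //; rewrite -lte_fin.
have [w farw] := choice far.
have [z zcl] := compact_seq_cluster (fun N => (w N).2.1) cT.
pose crossing n := (exists2 p, A n p & d z p < e / 4) /\
  (exists2 q, A n q & e / 2 < d z q).
have [phi phi_inj cross_phi] : exists2 phi : nat -> nat, injective phi &
    forall i, crossing (phi i).
  apply: frequently_subseq => N.
  have z_nbhs : nbhs z [set y | d z y < e / 4] by apply/d_nbhs; exists (e / 4); [lra|].
  have [m Nm zm] := zcl N _ z_nbhs.
  have [mw Ap Aq pq] := farw m.
  exists (w m).1; first exact: leq_trans Nm mw.
  split; first by exists (w m).2.1.
  exists (w m).2.2 => //; have := d_triangle (w m).2.1 z (w m).2.2.
  by rewrite (d_sym _ z) /= in zm *; lra.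
apply: (@no_disjoint_connected_crossings (A \o phi) z (e / 4) (e / 2)).
- by lra.
- by move=> i; exact: cA.
- by move=> i j ij; apply: disjA; apply: contra ij => /eqP/phi_inj ->.
- by move=> i; exact: (cross_phi i).1.
- by move=> i; exact: (cross_phi i).2.
Qed.

End disjoint_connected_family.

Lemma exists_meeting_iterates (R : realType) (T : topologicalType) (d : T -> T -> R)
    (f : T -> T) (E : set T) :
  compatible_metric d -> compact [set: T] -> (hausdorff1 d [set: T] < +oo)%E ->
  continuous f -> connected E ->
  (0 < limn_esup (fun n => diam d (fiter f n E)))%E ->
  exists n k, (0 < k)%N /\ fiter f n E `&` fiter f (n + k) E !=set0.
Proof.
move=> [d_ge0 d_eq0 d_sym d_triangle d_nbhs] cT HH fc cE.
move=> /limn_esup_gt0_frequently [e e_gt0 often_large]; apply: contrapT => no_meet.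
have disj i j : i != j -> fiter f i E `&` fiter f j E = set0.
  move=> ij; rewrite -subset0 => y [yi yj]; apply: no_meet.
  have meet m m' : (m < m')%N -> fiter f m E y -> fiter f m' E y ->
      exists n k, (0 < k)%N /\ fiter f n E `&` fiter f (n + k) E !=set0.
    move=> mm' ym ym'; exists m, (m' - m)%N; split; first by rewrite subn_gt0.
    by exists y; split => //; rewrite subnKC // ltnW.
  have [lt_ij|lt_ji|eq_ij] := ltngtP i j; [exact: (meet i j)|exact: (meet j i)|].
  by rewrite eq_ij eqxx in ij.
have [N small] := disjoint_connected_diam_small d_ge0 d_sym d_triangle
  (fun x y => (d_eq0 x y).1) d_nbhs HH cT e_gt0 (fun n => fiter_connected fc cE) disj.
by have [n Nn] := often_large N; rewrite ltNge small.
Qed.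

Lemma orbit_set_fiter (T : topologicalType) (f : T -> T) (A : set T) n :
  orbit_set f (fiter f n A) = \bigcup_(m in [set: nat]) fiter f (m + n) A.
Proof. by apply/seteqP; split => y [m _ ym]; exists m => //; rewrite fiterD in ym *. Qed.

Section Kset.
Variables (T : topologicalType) (f : T -> T) (E : set T) (n0 k : nat).

Lemma connected_Kset i : continuous f -> connected E ->
  fiter f n0 E `&` fiter f (n0 + k) E !=set0 -> connected (Kset f E n0 k i).
Proof.
move=> fc cE meet_k; apply: chain_connected => j; first exact: fiter_connected.
have -> : (n0 + i + j.+1 * k = i + j * k + n0 + k)%N by rewrite mulSn; lia.
have -> : (n0 + i + j * k = i + j * k + n0)%N by lia.
exact: fiter_meets_shift.
Qed.

Lemma image_Kset i : f @` Kset f E n0 k i = Kset f E n0 k i.+1.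
Proof.
have eS j : (n0 + i.+1 + j * k = (n0 + i + j * k).+1)%N by lia.
apply/seteqP; split => [_ [x [j _ jx] <-]|y [j _]].
  by exists j => //; rewrite eS -image_fiter; exists x.
by rewrite eS -image_fiter => -[x jx <-]; exists x => //; exists j.
Qed.

Lemma image_Kset_last : (0 < k)%N -> f @` Kset f E n0 k k.-1 `<=` Kset f E n0 k 0.
Proof.
move=> k_gt0 _ [x [j _ jx] <-]; exists j.+1 => //.
have -> : (n0 + 0 + j.+1 * k = (n0 + k.-1 + j * k).+1)%N by rewrite mulSn; lia.
by rewrite -image_fiter; exists x.
Qed.

Lemma fiter_sub_Kset0 : fiter f n0 E `<=` Kset f E n0 k 0.
Proof. by move=> y n0y; exists 0%N => //; rewrite mul0n !addn0. Qed.

End Kset.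

Section orbit_components.
Variables (T : topologicalType) (f : T -> T) (E : set T) (n0 : nat).
Hypothesis fc : continuous f.
Hypothesis cE : connected E.
Variable p0 : T.
Hypothesis p0_in : fiter f n0 E p0.

Let O := orbit_set f (fiter f n0 E).
Let B m := fiter f (m + n0) E.
Let L m := connected_component O (iter m f p0).

Lemma B_sub_O m : B m `<=` O.
Proof. by rewrite /O orbit_set_fiter => y; exists m. Qed.

Lemma image_sub_O (C : set T) : C `<=` O -> f @` C `<=` O.
Proof.
rewrite /O orbit_set_fiter => CO _ [x /CO [m _ mx] <-].
by exists m.+1 => //; rewrite addSn -image_fiter; exists x.
Qed.

Lemma B_iter_p0 m : B m (iter m f p0).
Proof. by case: p0_in => x Ex <-; exists x => //; rewrite iterD. Qed.

Lemma component_B m x : B m x -> connected_component O x = L m.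
Proof.
move=> mx; apply: same_connected_component.
exact: (connected_component_max mx (@B_sub_O m) (fiter_connected fc cE)) (B_iter_p0 m).
Qed.

Lemma L_succ m m' : L m = L m' -> L m.+1 = L m'.+1.
Proof.
move=> Lmm'; apply: same_connected_component.
have Lm_m' : L m (iter m' f p0).
  by rewrite Lmm'; exact/connected_component_refl/B_sub_O/B_iter_p0.
suff : f @` L m `<=` L m.+1 by apply; exists (iter m' f p0).
apply: connected_component_max.
- by exists (iter m f p0) => //; exact/connected_component_refl/B_sub_O/B_iter_p0.
- by apply: image_sub_O; exact: connected_component_sub.
- apply: connected_continuous_connected; first exact: component_connected.
  exact: continuous_subspaceT.
Qed.

Lemma L_addn t m m' : L m = L m' -> L (m + t) = L (m' + t).
Proof. by elim: t => [|t IH] Lmm'; rewrite ?addn0 // !addnS; apply/L_succ/IH. Qed.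

Lemma L_meets k m : fiter f n0 E `&` fiter f (n0 + k) E !=set0 -> L (m + k) = L m.
Proof.
move=> meet_k; have [y [my mky]] := fiter_meets_shift m meet_k.
have Bmky : B (m + k) y by rewrite /B addnAC.
by rewrite -(component_B my) -(component_B Bmky).
Qed.

Variable k0 : nat.
Hypothesis k0_gt0 : (0 < k0)%N.
Hypothesis meets_k0 : fiter f n0 E `&` fiter f (n0 + k0) E !=set0.

Let returns t := (0 < t)%N && `[< L t = L 0 >].
Let exists_return : exists t, returns t.
Proof.
by exists k0; rewrite /returns k0_gt0; apply/asboolP; rewrite -[k0]add0n L_meets.
Qed.
Let r := ex_minn exists_return.

Lemma r_gt0 : (0 < r)%N.
Proof. by rewrite /r; case: ex_minnP => t /andP[]. Qed.

Lemma L_r : L r = L 0.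
Proof. by rewrite /r; case: ex_minnP => t /andP[_ /asboolP]. Qed.

Lemma r_min t : (0 < t)%N -> L t = L 0 -> (r <= t)%N.
Proof.
move=> t_gt0 Lt; rewrite /r; case: ex_minnP => t' _; apply.
by rewrite /returns t_gt0; apply/asboolP.
Qed.

Lemma L_modn m : L m = L (m %% r).
Proof.
rewrite {1}(divn_eq m r) addnC; elim: (m %/ r)%N => [|q IH]; first by rewrite mul0n addn0.
by rewrite mulSn addnCA (L_addn _ L_r) add0n.
Qed.

Lemma L_inj i j : (i < r)%N -> (j < r)%N -> L i = L j -> i = j.
Proof.
have L_lt a b : (a < b)%N -> (b < r)%N -> L a <> L b.
  move=> ab br Lab; have := L_addn (r - b) Lab.
  rewrite subnKC ?(ltnW br) // L_r => Lt.
  have : (0 < a + (r - b))%N by lia.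
  by move/r_min/(_ Lt); lia.
move=> ir jr Lij; case: (ltngtP i j) => // [ij|ji]; first by case: (L_lt _ _ ij jr).
by case: (L_lt _ _ ji ir).
Qed.

Lemma L_eq m m' : L m = L m' <-> m = m' %[mod r].
Proof.
split => [Lmm'|mm']; last by rewrite L_modn mm' -L_modn.
by apply: L_inj; rewrite ?ltn_pmod ?r_gt0 // -!L_modn.
Qed.

Lemma mem_L j x : L j x <-> exists2 m, m = j %[mod r] & B m x.
Proof.
split => [jx|[m mj mx]].
  have := connected_component_sub jx; rewrite /O orbit_set_fiter => -[m _ mx].
  exists m => //; apply/L_eq; rewrite -(component_B mx).
  exact/esym/same_connected_component.
move/L_eq: mj => <-; rewrite -(component_B mx).
exact/connected_component_refl/(B_sub_O mx).
Qed.

Lemma L_component j : exists2 x, O x & L j = connected_component O x.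
Proof. by exists (iter j f p0) => //; exact/B_sub_O/B_iter_p0. Qed.

Lemma component_L x : O x -> exists2 j, (j < r)%N & connected_component O x = L j.
Proof.
rewrite {1}/O orbit_set_fiter => -[m _ mx]; exists (m %% r)%N.
  by rewrite ltn_pmod ?r_gt0.
by rewrite (component_B mx) L_modn.
Qed.

Lemma L_disjoint j j' : (j < r)%N -> (j' < r)%N -> j <> j' -> L j `&` L j' = set0.
Proof.
move=> jr j'r jj'; rewrite -subset0 => y [jy j'y]; apply/jj'/L_inj => //.
by rewrite /L (same_connected_component jy) (same_connected_component j'y).
Qed.

Lemma fiter_sub_L0 : fiter f n0 E `<=` L 0.
Proof. by move=> y n0y; apply/mem_L; exists 0%N. Qed.

Lemma image_L j : (j.+1 < r)%N -> f @` L j = L j.+1.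
Proof.
move=> jr; apply/seteqP; split => [_ [x /mem_L [m mj mx] <-]|y /mem_L [[|m]]].
- apply/mem_L; exists m.+1; first by rewrite -addn1 -modnDml mj modnDml addn1.
  by rewrite /B addSn -image_fiter; exists x.
- by rewrite mod0n modn_small.
- rewrite (modn_small jr) /B addSn -image_fiter => mj [x mx <-].
  exists x => //; apply/mem_L; exists m => //.
  by apply/eqP; rewrite -(eqn_modDr 1) !addn1 mj modn_small.
Qed.

Lemma image_L_last : f @` L r.-1 `<=` L 0.
Proof.
move=> _ [x /mem_L [m mr mx] <-]; apply/mem_L; exists m.+1.
  by rewrite -addn1 -modnDml mr modnDml addn1 prednK ?r_gt0 // modnn mod0n.
by rewrite /B addSn -image_fiter; exists x.
Qed.

Lemma r_dvd k : fiter f n0 E `&` fiter f (n0 + k) E !=set0 -> (r %| k)%N.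
Proof. by move=> /(L_meets 0)/L_eq; rewrite add0n mod0n /dvdn => ->. Qed.

Lemma Kset0_sub_L0 k : (r %| k)%N -> Kset f E n0 k 0 `<=` L 0.
Proof.
move=> rk y [j _ jy]; apply/mem_L; exists (j * k)%N.
  by rewrite mod0n; apply/eqP; rewrite -/(dvdn r _) dvdn_mull.
by rewrite /B addnC -[n0]addn0.
Qed.

Lemma L_Kset k j : (0 < k)%N -> (r %| k)%N -> (j < r)%N ->
  L j = \bigcup_(l in [set l : nat | (l < k %/ r)%N]) Kset f E n0 k (j + l * r).
Proof.
move=> k_gt0 rk jr; have kr : k = (k %/ r * r)%N by rewrite divnK.
apply/seteqP; split => [y /mem_L [m]|y [l _ [t _ ty]]].
  rewrite (modn_small jr) => mj my.
  have kr_gt0 : (0 < k %/ r)%N by rewrite divn_gt0 ?r_gt0 // dvdn_leq.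
  set q := (m %/ r)%N; set l := (q %% (k %/ r))%N; set t := (q %/ (k %/ r))%N.
  exists l; first by rewrite /= ltn_pmod.
  exists t => //; move: my; rewrite /B.
  have mq : m = (q * r + j)%N by rewrite -mj -divn_eq.
  have qt : q = (t * (k %/ r) + l)%N by rewrite -divn_eq.
  by rewrite mq qt {2}kr mulnDl mulnA; congr (fiter f _ E _); lia.
apply/mem_L; exists (j + l * r + t * k)%N.
  by rewrite kr mulnA -addnA -mulnDl addnC modnMDl.
by move: ty; rewrite /B; congr (fiter f _ E _); lia.
Qed.

Lemma orbit_set_L : O = \bigcup_(j in [set j : nat | (j < r)%N]) L j.
Proof.
apply/seteqP; split => [y Oy|y [j _ /connected_component_sub //]].
have [j jr Oyj] := component_L Oy; exists j => //.
by rewrite -Oyj; exact: connected_component_refl.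
Qed.

Lemma orbit_components_structure : exists (r : nat) (L : nat -> set T),
  [/\ (0 < r)%N,
      [/\ forall j, (j < r)%N -> exists2 x, O x & L j = connected_component O x,
          forall x, O x -> exists2 j, (j < r)%N & connected_component O x = L j &
          forall j j', (j < r)%N -> (j' < r)%N -> j <> j' -> L j `&` L j' = set0],
      [/\ fiter f n0 E `<=` L 0%N,
          forall j, (j.+1 < r)%N -> f @` L j = L j.+1 &
          f @` L r.-1 `<=` L 0%N],
      forall k, (0 < k)%N -> fiter f n0 E `&` fiter f (n0 + k) E !=set0 ->
        [/\ (r %| k)%N, Kset f E n0 k 0 `<=` L 0%N &
            forall j, (j < r)%N ->
              L j = \bigcup_(l in [set l : nat | (l < k %/ r)%N])
                      Kset f E n0 k (j + l * r)] &
      O = \bigcup_(j in [set j : nat | (j < r)%N]) L j].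
Proof.
exists r, L; split; [exact: r_gt0|split|split| |exact: orbit_set_L].
- by move=> j _; exact: L_component.
- exact: component_L.
- exact: L_disjoint.
- exact: fiter_sub_L0.
- exact: image_L.
- exact: image_L_last.
- move=> k k_gt0 /r_dvd rk; split => //; first exact: Kset0_sub_L0.
  by move=> j; exact: L_Kset.
Qed.

End orbit_components.

Section least_meeting.
Variables (T : topologicalType) (f : T -> T) (E : set T).
Let meets n k := fiter f n E `&` fiter f (n + k) E !=set0.

Lemma least_meeting_iterate : (exists n k, (0 < k)%N /\ meets n k) ->
  exists2 n0, exists2 k, (0 < k)%N & meets n0 k &
    forall m k, (0 < k)%N -> meets m k -> (n0 <= m)%N.
Proof.
move=> [n [k [k_gt0 nk]]].
have ex_meet : exists n, `[< exists2 k, (0 < k)%N & meets n k >].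
  by exists n; apply/asboolP; exists k.
case: (ex_minnP ex_meet) => n0 /asboolP n0_meets n0_min; exists n0 => //.
by move=> m k' k'_gt0 mk'; apply: n0_min; apply/asboolP; exists k'.
Qed.

Variable n0 : nat.
Hypothesis n0_min : forall m k, (0 < k)%N -> meets m k -> (n0 <= m)%N.

Lemma fiter_disjoint_before i j : (i < n0)%N -> i <> j ->
  fiter f i E `&` fiter f j E = set0.
Proof.
move=> i_lt ij; rewrite -subset0 => y [iy jy].
have no_meet a b : (a < b)%N -> (a < n0)%N -> fiter f a E y -> fiter f b E y -> False.
  move=> ab a_lt ay b_y; have /n0_min : meets a (b - a)%N.
    by exists y; split => //; rewrite subnKC // ltnW.
  by rewrite subn_gt0 => /(_ ab); lia.
case: (ltngtP i j) => [lt_ij|lt_ji|/ij //]; first exact: (no_meet i j).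
by apply: (no_meet j i) => //; exact: ltn_trans i_lt.
Qed.

Lemma fiter_disjoint_orbit_before i : (i < n0)%N ->
  fiter f i E `&` orbit_set f (fiter f n0 E) = set0.
Proof.
move=> i_lt; rewrite orbit_set_fiter -subset0 => y [iy [m _ my]].
by rewrite -(fiter_disjoint_before (j := (m + n0)%N) i_lt); [split|lia].
Qed.

End least_meeting.

Lemma orbit_set_prefix (T : topologicalType) (f : T -> T) (A : set T) n :
  orbit_set f A = (\bigcup_(i in [set i : nat | (i < n)%N]) fiter f i A)
                  `|` orbit_set f (fiter f n A).
Proof.
rewrite orbit_set_fiter; apply/seteqP; split => [y [m _ my]|y [[i _ iy]|[m _ my]]].
- case: (ltnP m n) => mn; first by left; exists m.
  by right; exists (m - n)%N => //; rewrite subnK.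
- by exists i.
- by exists (m + n)%N.
Qed.

Theorem lemma13 (R : realType) (T : topologicalType) (d : T -> T -> R)
  (f : T -> T) (E : set T) :
  compatible_metric d -> convex_metric d -> dendrite R T ->
  (hausdorff1 d [set: T] < +oo)%E ->
  continuous f -> connected E ->
  (0 < limn_esup (fun n => diam d (fiter f n E)))%E ->
  let meets n k := fiter f n E `&` fiter f (n + k) E !=set0 in
  exists n0 : nat,
    [/\ (* (1) n0 is the least such integer *)
        (exists2 k : nat, (0 < k)%N & meets n0 k),
        (forall m k : nat, (0 < k)%N -> meets m k -> (n0 <= m)%N),
        (* (2) *)
        (forall k : nat, (0 < k)%N -> meets n0 k ->
           [/\ forall i : nat, (i < k)%N -> connected (Kset f E n0 k i),
               forall i : nat, (i.+1 < k)%N ->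
                 f @` Kset f E n0 k i = Kset f E n0 k i.+1 &
               f @` Kset f E n0 k k.-1 `<=` Kset f E n0 k 0]) &
        (* (3) and (4) *)
        exists (r : nat) (L : nat -> set T),
          [/\ (0 < r)%N,
              (* L_0, ..., L_{r-1} are exactly the components of Orb_f(f^{n0}(E)) *)
              [/\ (forall j : nat, (j < r)%N ->
                 exists2 x, orbit_set f (fiter f n0 E) x &
                   L j = connected_component (orbit_set f (fiter f n0 E)) x),
              (forall x, orbit_set f (fiter f n0 E) x ->
                 exists2 j : nat, (j < r)%N &
                   connected_component (orbit_set f (fiter f n0 E)) x = L j) &
              (forall j j' : nat, (j < r)%N -> (j' < r)%N -> j <> j' ->
                 L j `&` L j' = set0)],
              [/\ fiter f n0 E `<=` L 0%N,
              (forall j : nat, (j.+1 < r)%N -> f @` L j = L j.+1) &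
              f @` L r.-1 `<=` L 0%N],
              (forall k : nat, (0 < k)%N -> meets n0 k ->
                 [/\ (r %| k)%N,
                     fiter f n0 E `<=` Kset f E n0 k 0,
                     Kset f E n0 k 0 `<=` L 0%N &
                     forall j : nat, (j < r)%N ->
                       L j = \bigcup_(l in [set l : nat | (l < k %/ r)%N])
                               Kset f E n0 k (j + l * r)]) &
              (* (4) Orb_f(E) is the disjoint union *)
              [/\ orbit_set f E =
                    (\bigcup_(i in [set i : nat | (i < n0)%N]) fiter f i E)
                    `|` (\bigcup_(j in [set j : nat | (j < r)%N]) L j),
                  (forall i i' : nat, (i < n0)%N -> (i' < n0)%N -> i <> i' ->
                     fiter f i E `&` fiter f i' E = set0) &
                  (forall i j : nat, (i < n0)%N -> (j < r)%N ->
                     fiter f i E `&` L j = set0)]]].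

Proof.
move=> cm _ [_ cT _ _ _] HH fc cE large meets.
have [n0 [k0 k0_gt0 meet_k0] n0_min] :=
  least_meeting_iterate (exists_meeting_iterates cm cT HH fc cE large).
have [p0 [p0_in _]] := meet_k0.
have [r [L [r_gt0 Lcomp Ldyn LK OL]]] :=
  orbit_components_structure fc cE p0_in k0_gt0 meet_k0.
exists n0; split => //; first by exists k0.
- move=> k k_gt0 meet_k; split.
  + by move=> i _; exact: connected_Kset.
  + by move=> i _; exact: image_Kset.
  + exact: image_Kset_last.
- exists r, L; split => //.
  + move=> k k_gt0 meet_k; have [rk K0L0 LK'] := LK k k_gt0 meet_k.
    by split => //; exact: fiter_sub_Kset0.
  + split; first by rewrite (orbit_set_prefix _ _ n0) OL.
    * by move=> i i' i_lt _; exact: (fiter_disjoint_before n0_min).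
    * move=> i j i_lt j_lt; have [L_comp _ _] := Lcomp.
      have [x Ox ->] := L_comp j j_lt.
      rewrite -subset0 => y [iy /connected_component_sub Oy].
      by rewrite -(fiter_disjoint_orbit_before n0_min i_lt).
Qed.
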